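(* Let $g(S) = w(S) := \sum_{v \in S} w(v)$ for nonnegative weights $w : V \to \mathbb{R}_{\ge 0}$. Let $d > 0$ and let $S_d^*$ be a maximum-weight independent set of the intersection graph $G_d(V)$ among those of size at most $k$. If $T$ is an output of $\mathrm{GreedyIndependentSet}(V,g,d',k)$ with $0 \le d' \le d/2$, then $w(T) \ge w(S_d^* )$.
   Context: Let $V$ be a finite set of points in a metric space with metric $\mathrm{dist}$. For $u \in V$ and $S \subseteq V$ let $\mathrm{dist}(u,S) = \min_{v \in S}\mathrm{dist}(u,v)$, with $\mathrm{dist}(u,\emptyset) = \infty$. For $d \ge 0$, the intersection graph $G_d(V)$ has vertex set $V$ and edge set $\{\{u,v\} : u \ne v,\ \mathrm{dist}(u,v) < d\}$; thus $S$ is an independent set of $G_d(V)$ iff $\mathrm{dist}(u,v) \ge d$ for all distinct $u,v \in S$. Let $k \ge 1$ be an integer. $\mathrm{GreedyIndependentSet}(V,g,d,k)$: initialize $S \gets \emptyset$; for $i = 1,\dots,k$: let $C = \{v \in V\setminus S : \mathrm{dist}(v,S) \ge d\}$; if $C = \emptyset$ return $S$; otherwise pick $t \in \arg\max_{v \in C} \big(g(S\cup\{v\}) - g(S)\big)$ (ties broken arbitrarily) and set $S \gets S \cup\{t\}$. After the loop, return $S$. *)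

From HB Require Import structures.
From mathcomp Require Import all_boot all_order all_algebra.
Set Implicit Arguments. Unset Strict Implicit. Unset Printing Implicit Defensive.
Import Order.TTheory GRing.Theory Num.Theory.
Local Open Scope ring_scope.

Definition is_metric (R : realFieldType) (P : Type) (dist : P -> P -> R) : Prop :=
  [/\ forall x y, 0 <= dist x y,
      forall x y, dist x y = 0 <-> x = y,
      forall x y, dist x y = dist y x
    & forall x y z, dist x z <= dist x y + dist y z].

Definition independent (R : realFieldType) (P : finType) (dist : P -> P -> R)
    (V : {set P}) (d : R) (S : {set P}) : Prop :=
  S \subset V /\ (forall u v, u \in S -> v \in S -> u != v -> d <= dist u v).

(* Candidate set C = { v in V \ S : dist(v,S) >= d } (dist(v,emptyset) = oo). *)
Definition candidates (R : realFieldType) (P : finType) (dist : P -> P -> R)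
    (V : {set P}) (d : R) (S : {set P}) : {set P} :=
  [set v in V :\: S | [forall s in S, d <= dist v s]].

(* greedy_run dist V g d n S out : running the remaining n iterations of
   GreedyIndependentSet from the current set S may return out
   (ties in the argmax are broken arbitrarily, hence a relation). *)
Inductive greedy_run (R : realFieldType) (P : finType) (dist : P -> P -> R)
    (V : {set P}) (g : {set P} -> R) (d : R) : nat -> {set P} -> {set P} -> Prop :=
  | greedy_done S : greedy_run dist V g d 0 S S
  | greedy_empty n S : candidates dist V d S = set0 -> greedy_run dist V g d n.+1 S S
  | greedy_pick n S t out :
      t \in candidates dist V d S ->
      (forall v, v \in candidates dist V d S ->
          g (v |: S) - g S <= g (t |: S) - g S) ->
      greedy_run dist V g d n (t |: S) out ->
      greedy_run dist V g d n.+1 S out.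

Definition greedy_output (R : realFieldType) (P : finType) (dist : P -> P -> R)
    (V : {set P}) (g : {set P} -> R) (d : R) (k : nat) (T : {set P}) : Prop :=
  greedy_run dist V g d k set0 T.

Definition wsum (R : realFieldType) (P : finType) (w : P -> R) (S : {set P}) : R :=
  \sum_(v in S) w v.

From mathcomp Require Import all_boot all_order all_algebra.
From mathcomp Require Import lra.
Import Order.TTheory GRing.Theory Num.Theory.
Local Open Scope ring_scope.
Set Implicit Arguments. Unset Strict Implicit.

(* An element s of S* is blocked by the current greedy set S once some t in S
   equals s or lies at distance < d' from it; an unblocked s is still a
   candidate, so every pick weighs at least as much as every unblocked s.
   Since d' <= d/2 and S* is d-independent, each pick blocks at most one new
   element of S*.  Hence the potential
     w(S) - w(blocked S) - (#S - #blocked S) x,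
   with x the largest weight left unblocked at the end, never decreases.
   At the end either nothing of S* is unblocked, or T has k elements and
   the unblocked part of S* weighs at most (k - #blocked T) x. *)

Lemma wsum_le_card (R : realFieldType) (P : finType) (w : P -> R) (A : {set P}) c :
  (forall s, s \in A -> w s <= c) -> wsum w A <= #|A|%:R * c.
Proof.
move=> le_c; rewrite /wsum -sum1_card natr_sum mulr_suml.
by apply: ler_sum => s /le_c; rewrite mul1r.
Qed.

Section Blocking.
Variables (R : realFieldType) (P : finType) (dist : P -> P -> R)
  (V : {set P}) (w : P -> R) (d d' : R) (Sstar : {set P}).

Definition blocks (t s : P) : bool := (s == t) || (dist s t < d').

Definition blocked (S : {set P}) : {set P} :=
  [set s in Sstar | [exists t in S, blocks t s]].

Lemma blocked0 : blocked set0 = set0.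
Proof. by apply/setP => s; rewrite !inE; apply/andP => -[_ /existsP[t]]; rewrite inE. Qed.

Lemma blocked_sub S : blocked S \subset Sstar.
Proof. by apply/subsetP => s; rewrite inE => /andP[]. Qed.

Lemma blocked_setU1 t S :
  blocked (t |: S) = [set s in Sstar | blocks t s] :|: blocked S.
Proof.
apply/setP => s; rewrite !inE -andb_orr; congr (_ && _); apply/existsP/orP.
- case=> u /andP[]; rewrite in_setU1 => /orP[/eqP -> -> | uS bus]; first by left.
  by right; apply/existsP; exists u; rewrite uS.
- case=> [bts | /existsP[u /andP[uS bus]]]; first by exists t; rewrite setU11.
  by exists u; rewrite in_setU1 uS orbT.
Qed.

Lemma blocked_subset (S S' : {set P}) : S \subset S' -> blocked S \subset blocked S'.
Proof.
move=> sub; apply/subsetP => s; rewrite !inE => /andP[-> /existsP[t /andP[tS bts]]].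
by apply/existsP; exists t; rewrite bts (subsetP sub).
Qed.

Lemma unblocked_candidate S s :
  Sstar \subset V -> s \in Sstar -> s \notin blocked S -> s \in candidates dist V d' S.
Proof.
move=> sV sS; rewrite !inE sS (subsetP sV s sS) /= => /existsPn unb.
have sNS : s \notin S by apply: contra (unb s); rewrite /blocks eqxx => ->.
rewrite sNS; apply/forallP => t; apply/implyP => tS.
by move: (unb t); rewrite tS /blocks negb_or -leNgt => /andP[].
Qed.

Lemma greedy_run_subset n S out :
  greedy_run dist V (wsum w) d' n S out -> S \subset out.
Proof.
elim=> // {}n {}S t {}out _ _ _ sub.
by apply: subset_trans sub; apply: subsetUr.
Qed.

Lemma greedy_run_stops n S out :
  greedy_run dist V (wsum w) d' n S out ->
  candidates dist V d' out = set0 \/ #|out| = (#|S| + n)%N.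
Proof.
elim=> [{}S|{}n {}S ->|{}n {}S t {}out tC _ _ [-> | ->]]; [|by left|by left|].
  by right; rewrite addn0.
right; move: tC; rewrite !inE => /andP[/andP[tNS _] _].
by rewrite cardsU1 tNS addnS.
Qed.

Hypothesis dist_metric : is_metric dist.
Hypothesis d'_ge0 : 0 <= d'.
Hypothesis d'_le_half : d' <= d / 2.
Hypothesis Sstar_indep : independent dist V d Sstar.

Lemma blocks_unique t u s :
  u \in Sstar -> s \in Sstar -> blocks t u -> blocks t s -> u = s.
Proof.
case: dist_metric => _ dist0 dist_sym dist_tri uS sS btu bts.
apply/eqP/negPn/negP => neq.
have [_ /(_ u s uS sS neq) d_le_us] := Sstar_indep.
have := dist_tri u t s; rewrite (dist_sym t s) => us_tri.
have dtt : dist t t = 0 by apply/dist0.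
(* lra does not see section hypotheses *)
have d'0 := d'_ge0; have d'd := d'_le_half.
move: btu bts; rewrite /blocks => /orP[/eqP ut|ut] /orP[/eqP st|st].
- by rewrite ut st eqxx in neq.
- by move: d_le_us us_tri; rewrite ut dtt; lra.
- by move: d_le_us us_tri; rewrite st dtt; lra.
- by lra.
Qed.

Lemma blocked_step t S :
  blocked (t |: S) = blocked S \/
  exists2 s, s \in Sstar :\: blocked S & blocked (t |: S) = s |: blocked S.
Proof.
rewrite blocked_setU1.
have [new0|[s]] := set_0Vmem ([set s in Sstar | blocks t s] :\: blocked S).
  by left; apply/setUidPr; rewrite -setD_eq0 new0.
rewrite !inE => /andP[sNB /andP[sS bts]]; right; exists s; first by rewrite !inE sNB.
apply/setP => u; rewrite in_setU in_setU1.
case uB: (u \in blocked S); first by rewrite !orbT.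
rewrite !orbF inE; apply/andP/eqP => [[uS btu]|->]; last by [].
exact: blocks_unique uS sS btu bts.
Qed.

Definition slack (x : R) (S : {set P}) : R :=
  wsum w S - wsum w (blocked S) - (#|S|%:R - #|blocked S|%:R) * x.

Lemma slack0 x : slack x set0 = 0.
Proof. by rewrite /slack blocked0 /wsum big_set0 cards0; lra. Qed.

Lemma slack_pick x t (S : {set P}) :
  t \notin S -> x <= w t ->
  (forall s, s \in Sstar :\: blocked S -> w s <= w t) ->
  slack x S <= slack x (t |: S).
Proof.
move=> tNS xt unb_le.
rewrite /slack /wsum big_setU1 //= cardsU1 tNS add1n -addn1 natrD.
have [->|[s sU ->]] := blocked_step t S; first lra.
have := unb_le s sU; move: sU; rewrite in_setD => /andP[sNB _].
by rewrite big_setU1 //= cardsU1 sNB add1n -addn1 natrD; lra.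
Qed.

Hypothesis w_ge0 : forall v, v \in V -> 0 <= w v.

Lemma greedy_run_slack n S out x :
  greedy_run dist V (wsum w) d' n S out ->
  x <= 0 \/ (exists2 s0, s0 \in Sstar :\: blocked out & x <= w s0) ->
  slack x S <= slack x out.
Proof.
have sV : Sstar \subset V by case: Sstar_indep.
elim=> // {}n {}S t {}out tC tmax run IH hx; apply: le_trans (IH hx).
move: tC (tmax); rewrite !inE => /andP[/andP[tNS tV] _] {}tmax.
have unb_le s : s \in Sstar :\: blocked S -> w s <= w t.
  rewrite in_setD => /andP[sNB sS]; have sC := unblocked_candidate sV sS sNB.
  move: (tmax s sC) (sC); rewrite !inE => + /andP[/andP[sNS _] _].
  by rewrite /wsum !big_setU1 //=; lra.
have blocked_S_out : blocked S \subset blocked out.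
  by apply/blocked_subset/(subset_trans _ (greedy_run_subset run))/subsetUr.
apply: slack_pick => //; case: hx => [x0|[s0 s0U xs0]]; first by have := w_ge0 tV; lra.
apply: le_trans xs0 (unb_le _ _); move: s0U; rewrite !in_setD => /andP[s0NB ->].
by rewrite andbT; apply: contra s0NB; apply: (subsetP blocked_S_out).
Qed.

End Blocking.

Theorem lemmaC1 (R : realFieldType) (P : finType) (dist : P -> P -> R)
    (V : {set P}) (w : P -> R) (k : nat) (d d' : R) (Sstar T : {set P}) :
  is_metric dist ->
  (forall v, v \in V -> 0 <= w v) ->
  (1 <= k)%N ->
  0 < d ->
  independent dist V d Sstar -> (#|Sstar| <= k)%N ->
  (forall S, independent dist V d S -> (#|S| <= k)%N -> wsum w S <= wsum w Sstar) ->
  0 <= d' -> d' <= d / 2 ->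
  greedy_output dist V (wsum w) d' k T ->
  wsum w Sstar <= wsum w T.
Proof.
move=> metric w_ge0 _ _ indep card_Sstar _ d'_ge0 d'_le_half run.
have sV : Sstar \subset V by case: indep.
set B := blocked dist d' Sstar T.
have split_Sstar : wsum w Sstar = wsum w B + wsum w (Sstar :\: B).
  by rewrite /wsum (big_setID B) /= (setIidPr (blocked_sub _ _ _ _)).
have slackT x := greedy_run_slack metric d'_ge0 d'_le_half indep w_ge0 (x := x) run.
have [unb0|[s1 s1U]] := set_0Vmem (Sstar :\: B).
  have := slackT 0 (or_introl (lexx 0)).
  by rewrite slack0 /slack mulr0 split_Sstar unb0 /wsum big_set0; lra.
have [noC|card_T] := greedy_run_stops run.
  move: s1U; rewrite in_setD => /andP[s1B s1S].
  by have := unblocked_candidate sV s1S s1B; rewrite noC inE.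
rewrite cards0 add0n in card_T.
have [s0 s0U s0_max] :
    exists2 s0, s0 \in Sstar :\: B & forall s, s \in Sstar :\: B -> w s <= w s0.
  by case: (arg_maxP w s1U) => s0; exists s0.
have w_s0 : 0 <= w s0 by apply/w_ge0/(subsetP sV); move: s0U; rewrite in_setD => /andP[].
have card_unb : (#|Sstar :\: B| + #|B| <= k)%N.
  by rewrite cardsD (setIidPr (blocked_sub _ _ _ _)) subnK ?subset_leq_card ?blocked_sub.
have := slackT (w s0) (or_intror (ex_intro2 _ _ s0 s0U (lexx _))).
have := wsum_le_card s0_max.
have : #|Sstar :\: B|%:R * w s0 <= (k%:R - #|B|%:R) * w s0.
  by apply: ler_wpM2r => //; rewrite lerBrDr -natrD ler_nat.
by rewrite slack0 /slack card_T split_Sstar; lra.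
Qed.
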